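(* Let $k\ge 1$ and let $T,\widetilde{T}$ be binary phylogenetic $X$-trees with $|X|=2k$ and $A_k(T)=A_k(\widetilde{T})$. Let $[x,y]$ be a cherry of $T$, and let $P=x,\beta_1,\ldots,\beta_m,y$ be the unique $x$-$y$ path in $\widetilde{T}$. Deleting all vertices of $P$ (and their incident edges) from $\widetilde{T}$ yields trees $T_{A_1},\ldots,T_{A_m}$ (where $T_{A_i}$ was attached to $\beta_i$) with leaf sets $A_1,\ldots,A_m$. Then $|A_i|$ is even for every $i\in\{1,\dots,m\}$.
   Context: A phylogenetic $X$-tree is a tree with no vertices of degree 2 whose leaves are bijectively labelled by (and identified with) $X$; binary means maximum degree 3. A cherry $[x,y]$ is a pair of leaves adjacent to the same vertex. For a binary character $f: X\to\{a,b\}$, $l(f,T)$ is the minimum, over all maps $g:V(T)\to\{a,b\}$ with $g|_X=f$, of the number of edges $\{u,v\}$ with $g(u)\ne g(v)$; $A_k(T)$ is the set of all binary characters $f$ on $X$ with $l(f,T)=k$. *)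

From mathcomp Require Import all_boot.
Set Implicit Arguments. Unset Strict Implicit. Unset Printing Implicit Defensive.

Definition deg (V : finType) (e : rel V) (v : V) : nat := #|[set w | e v w]|.

Definition is_tree (V : finType) (e : rel V) : Prop :=
  [/\ symmetric e, irreflexive e,
      (forall u v, connect e u v) &
      (forall c : seq V, uniq c -> 3 <= size c -> ~~ cycle e c)].

Definition phylo_tree (X V : finType) (e : rel V) (phi : X -> V) : Prop :=
  [/\ is_tree e, injective phi,
      (forall v, (deg e v == 1) = (v \in codom phi)) &
      (forall v, deg e v != 2)].

Definition binary_phylo_tree (X V : finType) (e : rel V) (phi : X -> V) : Prop :=
  phylo_tree e phi /\ (forall v, deg e v <= 3).

Definition changes (V : finType) (e : rel V) (g : V -> bool) : nat :=
  #|[set E : {set V} | [exists u, exists v,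
        [&& e u v, E == [set u; v] & g u != g v]]]|.

Definition pscore (X V : finType) (e : rel V) (phi : X -> V) (f : X -> bool) : nat :=
  \big[minn/#|{set V}|]_(g : {ffun V -> bool} | [forall x, g (phi x) == f x])
     changes e g.

Definition A_k (X V : finType) (e : rel V) (phi : X -> V) (k : nat)
  : {set {ffun X -> bool}} := [set f : {ffun X -> bool} | pscore e phi f == k].

Definition cherry (X V : finType) (e : rel V) (phi : X -> V) (x y : X) : Prop :=
  x != y /\ exists w, e (phi x) w /\ e (phi y) w.

(* Suppose the subtree hanging off the path vertex b (through its neighbour w)
   had an odd number of leaves.  Pair the 2k leaves of the second tree by k walks
   of minimal total length: two walks through a common edge could be recombined
   into shorter ones, so these walks are edge-disjoint.  A walk pairing x with y
   would contain every edge of the x-y path, so all other walks avoid the path;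
   but b together with the subtree is closed under edges off the path, and by
   parity some walk has exactly one end in the subtree.  Hence x and y lie in
   different walks.  Making exactly one end of each walk true, with x and y among
   them, gives a character f with l(f) = k in the second tree (each of the k
   edge-disjoint walks needs its own change), so f is in A_k; yet in the first
   tree the true cherry [x,y] lets f be realised with fewer than k changes. *)
From mathcomp Require Import all_boot zify.
Set Implicit Arguments. Unset Strict Implicit. Unset Printing Implicit Defensive.

Section Walks.
Variable V : finType.
Implicit Types (a u v : V) (s : seq V) (w : V * seq V) (E : {pred {set V}}).

Definition walk_edges w : seq {set V} := pairmap (fun u v => [set u; v]) w.1 w.2.
Definition walk_end w := last w.1 w.2.
Definition walk_ends w := [:: w.1; walk_end w].

Definition avoid (e : rel V) E := [rel x y | e x y && ([set x; y] \notin E)].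

Lemma walk_edgesP a s F : F \in walk_edges (a, s) ->
  exists s1 v s2, s = s1 ++ v :: s2 /\ F = [set last a s1; v].
Proof.
elim: s a => [|b s IH] a //=; rewrite /walk_edges /= inE => /orP[/eqP->|].
  by exists [::], b, s.
by move/(IH b) => [s1 [v [s2 [-> ->]]]]; exists (b :: s1), v, s2.
Qed.

Lemma mem_walk_edges a s1 v s2 : [set last a s1; v] \in walk_edges (a, s1 ++ v :: s2).
Proof. by rewrite /walk_edges /= pairmap_cat mem_cat /= inE eqxx orbT. Qed.

Lemma walk_edges_sub a s F t : F \in walk_edges (a, s) -> t \in F -> t \in a :: s.
Proof.
move/walk_edgesP=> [s1 [v [s2 [-> ->]]]]; rewrite in_set2 -cat_cons mem_cat.
by case/orP=> /eqP->; [rewrite mem_last | rewrite mem_head orbT].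
Qed.

Lemma path_avoid e E a s :
  path e a s -> {in walk_edges (a, s), forall F, F \notin E} -> path (avoid e E) a s.
Proof.
elim: s a => [|b s IH] a //= /andP[eab ps] notE.
rewrite eab notE /=; last by rewrite /walk_edges /= inE eqxx.
apply: IH => // F HF.
by apply: notE; rewrite /walk_edges /= inE HF orbT.
Qed.

Lemma last_rev_belast a s : last (last a s) (rev (belast a s)) = a.
Proof.
elim/last_ind: s => [|s z _] //=.
by rewrite last_rcons belast_rcons rev_cons last_rcons.
Qed.

Lemma set2_eq (a b c d : V) : a != b -> [set a; b] = [set c; d] ->
  (a = c /\ b = d) \/ (a = d /\ b = c).
Proof.
move=> nab E.
have : b \in [set c; d] by rewrite -E set22.
have : a \in [set c; d] by rewrite -E set21.
rewrite !in_set2 => /orP[]/eqP Ha /orP[]/eqP Hb; [| by left | by right |];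
  by move: nab; rewrite Ha Hb eqxx.
Qed.

End Walks.

Section Pairings.
Variables (V : finType) (e : rel V).
Hypotheses (esym : symmetric e) (eirr : irreflexive e).
Implicit Types (a : V) (L : seq V) (w : V * seq V) (ws : seq (V * seq V)).

Definition endpoints ws := flatten (map (@walk_ends V) ws).

Lemma endpoints_cons w ws : endpoints (w :: ws) = walk_ends w ++ endpoints ws.
Proof. by []. Qed.

Lemma mem_endpoints ws c v : c \in ws -> v \in walk_ends c -> v \in endpoints ws.
Proof. by move=> cin vc; apply/flattenP; exists (walk_ends c); rewrite ?map_f. Qed.

Lemma size_endpoints ws : size (endpoints ws) = (size ws).*2.
Proof. by elim: ws => //= c ws IH; rewrite -/(endpoints ws) IH doubleS. Qed.

Definition pairing L ws :=
  all (fun w => path e w.1 w.2) ws && perm_eq (endpoints ws) L.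

Definition total_length ws := sumn (map (fun w => size w.2) ws).

Definition edge_disjoint ws :=
  all (fun w => all (fun w' => (w == w') || ~~ has (mem (walk_edges w')) (walk_edges w)) ws) ws.

Lemma uniq_walks_of_ends ws : uniq (endpoints ws) -> uniq ws.
Proof.
elim: ws => // w ws IH; rewrite endpoints_cons cat_uniq => /and3P[_ hn /IH uws] /=.
rewrite uws andbT.
apply: contra hn => win; apply/hasP; exists w.1; last exact: mem_head.
exact: mem_endpoints win (mem_head _ _).
Qed.

Lemma walk_ends_inj ws w w' v : uniq (endpoints ws) ->
  w \in ws -> w' \in ws -> v \in walk_ends w -> v \in walk_ends w' -> w = w'.
Proof.
elim: ws => // c ws IH; rewrite endpoints_cons cat_uniq => /and3P[_ hn u].
have notc c' : c' \in ws -> v \in walk_ends c -> v \in walk_ends c' -> False.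
  by move=> c'in hv hv'; case/negP: hn; apply/hasP; exists v; [exact: mem_endpoints c'in hv' |].
move=> /predU1P[->|h1] /predU1P[->|h2] hv hv' //.
- by case: (notc _ h2 hv hv').
- by case: (notc _ h1 hv' hv).
- exact: IH.
Qed.

Lemma walk_ends_neq ws c : uniq (endpoints ws) -> c \in ws -> c.1 != walk_end c.
Proof.
elim: ws => // c' ws IH; rewrite endpoints_cons cat_uniq => /and3P[u1 _ u2].
by rewrite inE => /predU1P[-> | /(IH u2)] //; move: u1; rewrite /= inE andbT.
Qed.

Lemma rev_path_sym a s : path e a s -> path e (last a s) (rev (belast a s)).
Proof. by rewrite rev_path; apply: sub_path => x y /=; rewrite esym. Qed.

Lemma walks_exchange w1 w2 : path e w1.1 w1.2 -> path e w2.1 w2.2 ->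
  has (mem (walk_edges w2)) (walk_edges w1) -> exists w1' w2',
  [/\ path e w1'.1 w1'.2, path e w2'.1 w2'.2,
      size w1'.2 + size w2'.2 < size w1.2 + size w2.2 &
      perm_eq (walk_ends w1' ++ walk_ends w2') (walk_ends w1 ++ walk_ends w2)].
Proof.
case: w1 w2 => [a1 s] [a2 t] /= p1 p2 /hasP [F /walk_edgesP [s1 [v1 [s2 [Es ->]]]]].
move=> /walk_edgesP [t1 [v2 [t2 [Et EF]]]]; subst s t.
move: p1 p2; rewrite !cat_path /= => /and3P[ps1 e1 ps2] /and3P[pt1 e2 pt2].
have n1 : last a1 s1 != v1 by apply: contraTneq e1 => ->; rewrite eirr.
have [[Hu Hv] | [Hu Hv]] := set2_eq n1 EF.
- exists (a1, s1 ++ rev (belast a2 t1)), (last v1 s2, rev (belast v1 s2) ++ t2) => /=.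
  split.
  + by rewrite cat_path ps1 Hu rev_path_sym.
  + by rewrite cat_path rev_path_sym // last_rev_belast Hv.
  + rewrite !size_cat !size_rev !size_belast /=; lia.
  + rewrite /walk_ends /walk_end /= !last_cat /= Hu !last_rev_belast Hv.
    by rewrite perm_cons (perm_catCA [:: _] [:: _] [:: _]).
- exists (a1, s1 ++ t2), (a2, t1 ++ s2) => /=.
  split.
  + by rewrite cat_path ps1 Hu.
  + by rewrite cat_path pt1 -Hv.
  + rewrite !size_cat /=; lia.
  + rewrite /walk_ends /walk_end /= !last_cat /= -Hu Hv perm_cons.
    exact: permEl (perm_rev [:: last (last a2 t1) s2; a2; last (last a1 s1) t2]).
Qed.

Lemma pairing_shorten L ws : uniq L -> pairing L ws -> ~~ edge_disjoint ws ->
  exists2 ws', pairing L ws' & total_length ws' < total_length ws.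
Proof.
move=> uL /andP[pw pL] /allPn [w win /allPn [w' w'in]].
have uws : uniq ws by apply: uniq_walks_of_ends; rewrite (perm_uniq pL).
rewrite negb_or negbK => /andP[nww hs].
have [w1 [w2 [q1 q2 sz pe]]] := walks_exchange (allP pw w win) (allP pw w' w'in) hs.
set rest := rem w' (rem w ws).
have Hp : perm_eq ws [:: w, w' & rest].
  apply: perm_trans (perm_to_rem win) _; rewrite perm_cons; apply: perm_to_rem.
  by rewrite mem_rem_uniq // inE eq_sym nww w'in.
exists [:: w1, w2 & rest].
- rewrite /pairing /= q1 q2 /=; apply/andP; split.
    by apply/allP => c /mem_rem /mem_rem; apply: (allP pw).
  apply: perm_trans _ pL; rewrite perm_sym.
  apply: perm_trans (perm_flatten (perm_map (@walk_ends V) Hp)) _.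
  by rewrite -/(endpoints _) !endpoints_cons !catA perm_cat2r perm_sym.
- rewrite /total_length (perm_sumn (perm_map (fun w => size w.2) Hp)) /=.
  by rewrite !addnA ltn_add2r.
Qed.

Lemma exists_pairing L : (forall u v, connect e u v) -> ~~ odd (size L) -> exists ws, pairing L ws.
Proof.
move=> conn; move: {2}(size L) (leqnn (size L)) => n.
elim: n L => [|n IH] [|a [|b L]] //= hs; try by exists [::].
rewrite negbK => /(IH L (ltac:(lia))) [ws /andP[pw pL]].
have /connectP [s ps ->] := conn a b.
by exists ((a, s) :: ws); rewrite /pairing /= ps pw /= !perm_cons.
Qed.

(* A pairing of minimal total length is edge-disjoint. *)
Lemma exists_edge_disjoint_pairing L : (forall u v, connect e u v) ->
  uniq L -> ~~ odd (size L) -> exists ws, pairing L ws /\ edge_disjoint ws.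
Proof.
move=> conn uL /(exists_pairing conn) [ws].
move: {2}(total_length ws) (leqnn (total_length ws)) => n.
elim: n ws => [|n IH] ws hn ok; have [dj | ndj] := boolP (edge_disjoint ws); try by exists ws.
- by have [ws' _] := pairing_shorten uL ok ndj; lia.
- by have [ws' ok' lt] := pairing_shorten uL ok ndj; apply: (IH ws') => //; lia.
Qed.
End Pairings.

Lemma split_between (T : eqType) (a t1 t2 : T) (p : seq T) :
  t1 \in a :: p -> t2 \in a :: p -> t1 != t2 -> exists s1 v s2, p = s1 ++ v :: s2 /\
    ((t1 \in a :: s1) && (t2 \in v :: s2) || (t2 \in a :: s1) && (t1 \in v :: s2)).
Proof.
elim: p a => [|b p IH] a; first by rewrite !inE => /eqP-> /eqP->; rewrite eqxx.
rewrite [t1 \in _]in_cons [t2 \in _]in_cons.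
case: (t1 =P a) => [-> _ | _] /=; [|case: (t2 =P a) => [-> | _] /=].
- by rewrite eq_sym => /[swap] /negbTE -> /= t2p; exists [::], b, p; rewrite mem_head t2p.
- by move=> t1p _ _; exists [::], b, p; rewrite mem_head t1p orbT.
- move=> t1p t2p /(IH b t1p t2p) [s1 [v [s2 [-> hs]]]]; exists (b :: s1), v, s2.
  split=> //; case/orP: hs => /andP[h1 h2]; apply/orP; [left | right];
  by rewrite in_cons h1 h2 orbT.
Qed.

Section Trees.
Variables (V : finType) (e : rel V).
Hypotheses (esym : symmetric e) (eirr : irreflexive e).
Hypothesis acyclic : forall c : seq V, uniq c -> 3 <= size c -> ~~ cycle e c.
Implicit Types (a u v : V) (s p : seq V).

Lemma avoid_sym E : symmetric (avoid e E).
Proof. by move=> x y /=; rewrite esym setUC. Qed.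

Lemma edge_unavoidable u v : e u v -> ~~ connect (avoid e (pred1 [set u; v])) u v.
Proof.
move=> euv; apply/negP => /connectP [s]; case/shortenP => s' ps' us' _ hl.
case: s' ps' us' hl => [|b [|c r]] ps' us' /= hl.
- by move: euv; rewrite hl eirr.
- by move: ps'; rewrite /= -hl inE eqxx andbF.
- have pe : path e u [:: b, c & r] by apply: sub_path ps' => x y /andP[].
  have : cycle e [:: u, b, c & r] by rewrite /cycle rcons_path pe /= -hl esym.
  by rewrite (negbTE (acyclic us' isT)).
Qed.

Lemma path_edge_separates a s1 v s2 t1 t2 :
  path e a (s1 ++ v :: s2) -> uniq (a :: s1 ++ v :: s2) ->
  t1 \in a :: s1 -> t2 \in v :: s2 ->
  ~~ connect (avoid e (pred1 [set last a s1; v])) t1 t2.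
Proof.
set u := last a s1; set F := pred1 [set u; v].
rewrite -cat_cons cat_uniq => + /and3P[_ hn _].
rewrite cat_path /= => /and3P[ps1 euv ps2] ht1 ht2.
have vA : v \notin a :: s1 by apply: contra hn => vA; apply/hasP; exists v; rewrite ?mem_head.
have uB : u \notin v :: s2 by apply: contra hn => uB; apply/hasP; exists u; rewrite ?mem_last.
have pA : path (avoid e F) a s1.
  apply: (path_avoid (E := F) ps1) => F' /walk_edges_sub sA; rewrite inE.
  by apply: contraNneq _ vA => E; apply: sA; rewrite E set22.
have pB : path (avoid e F) v s2.
  apply: (path_avoid (E := F) ps2) => F' /walk_edges_sub sB; rewrite inE.
  by apply: contraNneq _ uB => E; apply: sB; rewrite E set21.
have cs := sym_connect_sym (avoid_sym F).
apply: contraNN (edge_unavoidable euv) => ct.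
apply: connect_trans (connect_trans _ ct) _; rewrite cs.
- apply: connect_trans _ (path_connect pA (mem_last a s1)).
  by rewrite cs; exact: (path_connect pA ht1).
- exact: (path_connect pB ht2).
Qed.

Lemma path_edges_unavoidable a p q qs :
  path e a p -> uniq (a :: p) -> path e q qs ->
  a \in q :: qs -> last a p \in q :: qs -> {subset walk_edges (a, p) <= walk_edges (q, qs)}.
Proof.
move=> pp up pq ha hl F /walk_edgesP [s1 [v [s2 [Ep EF]]]]; subst p F.
apply/negPn/negP => hF.
have pq' : path (avoid e (pred1 [set last a s1; v])) q qs.
  by apply: (path_avoid (E := pred1 _) pq) => F' HF'; rewrite inE; apply: contraNneq _ hF => <-.
have cq := path_connect pq'; have cs := sym_connect_sym (avoid_sym (pred1 [set last a s1; v])).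
have lB : last a (s1 ++ v :: s2) \in v :: s2 by rewrite last_cat /= mem_last.
case/negP: (path_edge_separates pp up (mem_head a s1) lB).
by apply: connect_trans (cq _ hl); rewrite cs; apply: cq.
Qed.

Lemma path_vertices_disconnected a p t1 t2 :
  path e a p -> uniq (a :: p) -> t1 \in a :: p -> t2 \in a :: p ->
  connect (avoid e (mem (walk_edges (a, p)))) t1 t2 -> t1 = t2.
Proof.
move=> pp up h1 h2 ct; apply/eqP/negPn/negP => /(split_between h1 h2) [s1 [v [s2 [Ep hs]]]].
move: pp up ct; rewrite Ep => pp up.
have sub : subrel (avoid e (mem (walk_edges (a, s1 ++ v :: s2))))
                  (connect (avoid e (pred1 [set last a s1; v]))).
  move=> x y /andP[exy hxy]; apply: connect1; rewrite /= exy inE.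
  by apply: contraNneq _ hxy => ->; apply: mem_walk_edges.
have cs := sym_connect_sym (avoid_sym (pred1 [set last a s1; v])).
move=> /(connect_sub sub) ct.
case/orP: hs => /andP[ht1 ht2]; move/negP: (path_edge_separates pp up ht1 ht2); apply => //.
by rewrite cs.
Qed.

End Trees.

Lemma card_bigcup_le (T I : finType) (P : pred I) (A : I -> {set T}) :
  #|\bigcup_(i | P i) A i| <= \sum_(i | P i) #|A i|.
Proof.
elim/big_rec2: _ => [|i S n _ H]; first by rewrite cards0.
by apply: leq_trans (leq_card_setU _ _) _; rewrite leq_add2l.
Qed.

Lemma deg3_neighbours (V : finType) (e : rel V) v t1 t2 t3 :
  deg e v <= 3 -> e v t1 -> e v t2 -> e v t3 -> uniq [:: t1; t2; t3] ->
  deg e v = 3 /\ forall t, e v t -> t \in [:: t1; t2; t3].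
Proof.
move=> hd e1 e2 e3 u3; set N := [set t in [:: t1; t2; t3]].
have sub : N \subset [set t | e v t].
  by apply/subsetP => t; rewrite !inE; case/or3P => /eqP->.
have c3 : #|N| = 3 by rewrite cardsE (card_uniqP u3).
have d3 : deg e v = 3 by apply/eqP; rewrite eqn_leq hd -c3 subset_leq_card.
split=> // t evt; apply/negPn/negP => ht.
have tN : t \notin N by rewrite in_set.
have : t |: N \subset [set t | e v t] by rewrite subUset sub1set inE evt sub.
by move/subset_leq_card; rewrite cardsU1 tN c3 -/(deg e v) d3.
Qed.

Section Parsimony.
Variables (X V : finType) (e : rel V) (phi : X -> V).
Implicit Types (f : {ffun X -> bool}) (g : V -> bool).

Definition change_edges g :=
  [set E : {set V} | [exists u, exists v, [&& e u v, E == [set u; v] & g u != g v]]].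

Lemma changesE g : changes e g = #|change_edges g|.
Proof. by []. Qed.

Lemma path_change_edge g a s : path e a s -> g a != g (last a s) ->
  has (mem (change_edges g)) (walk_edges (a, s)).
Proof.
elim: s a => [|b s IH] a /=; first by rewrite eqxx.
move=> /andP[eab ps] hg; rewrite /walk_edges /=.
have [gab | nab] := eqVneq (g a) (g b); first by rewrite IH ?orbT // -gab.
rewrite inE; apply/orP; left.
by apply/existsP; exists a; apply/existsP; exists b; rewrite eab eqxx nab.
Qed.

Hypothesis esym : symmetric e.

Lemma changes_le_sum g : changes e g <= \sum_(v | g v) #|[set t | e v t && ~~ g t]|.
Proof.
set S := fun v => [set [set v; t] | t in [set t | e v t && ~~ g t]].
apply: (@leq_trans #|\bigcup_(v | g v) S v|); last first.
  by apply: leq_trans (card_bigcup_le _ _) _; apply: leq_sum => v _; exact: leq_imset_card.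
apply: subset_leq_card; apply/subsetP => E; rewrite inE.
case/existsP => u /existsP[v /and3P[euv /eqP-> guv]].
have [gu | ngu] := boolP (g u).
  apply/bigcupP; exists u => //; apply/imsetP; exists v => //.
  by rewrite inE euv; move: guv; rewrite gu; case: (g v).
apply/bigcupP; exists v; first by move: guv; rewrite (negbTE ngu); case: (g v).
by apply/imsetP; exists u; [rewrite inE esym euv ngu | rewrite setUC].
Qed.

Lemma changes_le_card g (B : pred V) :
  (forall v, g v -> ~~ B v -> #|[set t | e v t && ~~ g t]| <= 1) ->
  (forall v, g v -> B v -> [set t | e v t && ~~ g t] = set0) ->
  changes e g <= #|[set v | g v && ~~ B v]|.
Proof.
move=> H1 H2; apply: leq_trans (changes_le_sum g) _.
rewrite -sum1dep_card (bigID B) /= big1 ?add0n; last by move=> v /andP[gv bv]; rewrite H2 ?cards0.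
by apply: leq_sum => v /andP[gv bv]; apply: H1.
Qed.

Lemma pscore_le_changes f (g : {ffun V -> bool}) :
  [forall x, g (phi x) == f x] -> pscore e phi f <= changes e g.
Proof.
move=> hg; rewrite /pscore.
elim: (index_enum _) (mem_index_enum g) => //= h r IH; rewrite inE big_cons.
case/predU1P=> [<-|gr]; first by rewrite hg geq_minl.
by case: ifP => _; [apply: leq_trans (geq_minr _ _) (IH gr) | exact: IH].
Qed.

Lemma pscore_ge_changes f k : k <= #|V| ->
  (forall g : {ffun V -> bool}, [forall x, g (phi x) == f x] -> k <= changes e g) ->
  k <= pscore e phi f.
Proof.
move=> hk H; apply: (big_ind (fun n => k <= n)) => // [|m n hm hn]; last by rewrite leq_min hm hn.
apply: leq_trans hk (leq_trans (ltnW (ltn_expl _ (isT : 1 < 2))) _).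
by rewrite -cardsT -card_powerset max_card.
Qed.

End Parsimony.

Section LeafBounds.
Variables (X V : finType) (e : rel V) (phi : X -> V).
Hypothesis hT : binary_phylo_tree e phi.
Implicit Types f : {ffun X -> bool}.

Let esym : symmetric e. Proof. by case: hT => [[[]]]. Qed.
Let phi_inj : injective phi. Proof. by case: hT => [[]]. Qed.

Lemma leaf_neighbours z : #|[set t | e (phi z) t]| = 1.
Proof. by case: hT => [[_ _ hl _] _]; apply/eqP; rewrite -/(deg e (phi z)) hl codom_f. Qed.

Lemma leaf_neighbour_eq z t t' : e (phi z) t -> e (phi z) t' -> t = t'.
Proof.
have /eqP/cards1P [c hc] := leaf_neighbours z.
move=> et et'; have : t \in [set c] by rewrite -hc inE.
have : t' \in [set c] by rewrite -hc inE.
by rewrite !inE => /eqP-> /eqP->.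
Qed.

Lemma card_false_neighbours_leaf z (g : V -> bool) : #|[set t | e (phi z) t && ~~ g t]| <= 1.
Proof.
rewrite -(leaf_neighbours z); apply: subset_leq_card.
by apply/subsetP => t; rewrite !inE => /andP[].
Qed.

Definition leaf_extension f (W : {set V}) : {ffun V -> bool} :=
  [ffun v => (v \in W) || [exists z, (phi z == v) && f z]].

Lemma leaf_extension_leaf f (W : {set V}) z :
  phi z \notin W -> leaf_extension f W (phi z) = f z.
Proof.
move=> zW; rewrite ffunE (negbTE zW) /=.
by apply/existsP/idP => [[z' /andP[/eqP/phi_inj -> //]] | fz]; exists z; rewrite eqxx.
Qed.

Lemma pscore_le_extension f (W : {set V}) :
  (forall z, phi z \notin W) -> pscore e phi f <= changes e (leaf_extension f W).
Proof.
by move=> Wleaf; apply: pscore_le_changes; apply/forallP => z; rewrite leaf_extension_leaf.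
Qed.

Lemma pscore_le_card_true f : pscore e phi f <= #|[set z | f z]|.
Proof.
have Wleaf z : phi z \notin (set0 : {set V}) by rewrite inE.
apply: leq_trans (pscore_le_extension f Wleaf) _.
apply: leq_trans (changes_le_card esym (B := pred0) _ _) _ => //.
  move=> v; rewrite ffunE inE /= => /existsP[z /andP[/eqP<- _]] _.
  exact: card_false_neighbours_leaf.
apply: leq_trans (leq_imset_card phi [set z | f z]).
apply: subset_leq_card; apply/subsetP => v; rewrite !inE ffunE in_set0 andbT.
by case/existsP => z /andP[/eqP<- fz]; apply/imsetP; exists z; rewrite ?inE.
Qed.

(* Colouring the common neighbour [w] of a [true] cherry [true] as well, the two
   cherry edges carry no change and [w] replaces both cherry leaves in the count. *)
Lemma cherry_pscore_lt_card_true f x y :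
  cherry e phi x y -> f x -> f y -> pscore e phi f < #|[set z | f z]|.
Proof.
move=> [nxy [w [exw eyw]]] fx fy.
case: hT => [[_ _ hleaf _] hdeg].
have nphi : phi x != phi y by apply: contra nxy => /eqP/phi_inj->.
have sub2 : [set phi x; phi y] \subset [set t | e w t].
  by apply/subsetP => t; rewrite !inE => /orP[]/eqP->; rewrite esym.
have w_leaf : w \notin codom phi.
  rewrite -hleaf; apply/negP => /eqP hw.
  by move: (subset_leq_card sub2); rewrite cards2 nphi -/(deg e w) hw.
have Wleaf z : phi z \notin [set w] by rewrite inE; apply: contraNneq w_leaf => <-; apply: codom_f.
set g := leaf_extension f [set w].
have gphi z : g (phi z) = f z by apply: leaf_extension_leaf.
apply: leq_ltn_trans (pscore_le_extension f Wleaf) _.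
set B := [pred v | (v == phi x) || (v == phi y)].
apply: leq_ltn_trans (changes_le_card esym (B := B) _ _) _.
- move=> v; rewrite ffunE inE => /orP[/eqP-> _ | /existsP[z /andP[/eqP<- _]] _].
    have hsub : [set t | e w t && ~~ g t] \subset [set t | e w t] :\: [set phi x; phi y].
      apply/subsetP => t; rewrite !inE => /andP[-> gt]; rewrite andbT.
      by apply: contra gt => /orP[]/eqP->; rewrite gphi.
    apply: leq_trans (subset_leq_card hsub) _.
    by rewrite cardsD (setIidPr sub2) cards2 nphi; have := hdeg w; rewrite /deg; lia.
  exact: card_false_neighbours_leaf.
- move=> v _ /orP[]/eqP-> ; apply/setP => t; rewrite !inE; apply/negP => /andP[et].
    by rewrite (leaf_neighbour_eq et exw) ffunE inE eqxx.
  by rewrite (leaf_neighbour_eq et eyw) ffunE inE eqxx.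
- set F := [set z | f z].
  have hF : [set v | g v && ~~ B v] \subset w |: (phi @: (F :\: [set x; y])).
    apply/subsetP => v; rewrite !inE ffunE inE.
    case/andP => /orP[-> // | /existsP[z /andP[/eqP<- fz]]] hB.
    apply/orP; right; apply/imsetP; exists z => //; rewrite !inE fz andbT.
    by apply: contra hB => /orP[]/eqP->; rewrite eqxx ?orbT.
  apply: leq_ltn_trans (subset_leq_card hF) _; apply: leq_ltn_trans (leq_card_setU _ _) _.
  have hxy : [set x; y] \subset F by apply/subsetP => t; rewrite !inE => /orP[]/eqP->.
  have := leq_imset_card phi (F :\: [set x; y]); have := subset_leq_card hxy.
  by rewrite cards1 cardsD (setIidPr hxy) cards2 nxy; lia.
Qed.

End LeafBounds.

Lemma changes_ge_edge_disjoint (V : finType) (e : rel V) (g : V -> bool) ws :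
  uniq ws -> edge_disjoint ws -> all (fun w => path e w.1 w.2) ws ->
  {in ws, forall c, g c.1 != g (walk_end c)} -> size ws <= changes e g.
Proof.
move=> uws hdisj pw hg.
have hch c : c \in ws -> exists F, (F \in walk_edges c) && (F \in change_edges e g).
  move=> cin; have /hasP [F HF1 HF2] := path_change_edge (allP pw c cin) (hg c cin).
  by exists F; rewrite HF1.
pose h c := odflt set0 [pick F | (F \in walk_edges c) && (F \in change_edges e g)].
have hh c : c \in ws -> (h c \in walk_edges c) && (h c \in change_edges e g).
  by move=> /hch [F hF]; rewrite /h; case: pickP => [F' // | /(_ F)]; rewrite hF.
have uh : uniq (map h ws).
  rewrite map_inj_in_uniq // => c c' cin c'in hcc; apply/eqP/negPn/negP => ncc.
  have := allP (allP hdisj c cin) c' c'in; rewrite /= (negbTE ncc) /= => /hasP; apply.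
  by exists (h c); [case/andP: (hh c cin) | rewrite hcc; case/andP: (hh c' c'in)].
rewrite changesE -(size_map h) -(card_uniqP uh); apply: subset_leq_card.
by apply/subsetP => F /mapP [c cin ->]; case/andP: (hh c cin).
Qed.

Definition pick_end (V : finType) (P : pred V) (c : V * seq V) :=
  if P (walk_end c) then walk_end c else c.1.

Definition split_character (X V : finType) (phi : X -> V) (ws : seq (V * seq V)) (P : pred V)
  : {ffun X -> bool} := [ffun z => phi z \in map (pick_end P) ws].

Section SplitCharacter.
Variables (X V : finType) (e : rel V) (phi : X -> V) (ws : seq (V * seq V)) (P : pred V).
Hypothesis hT : binary_phylo_tree e phi.
Hypothesis hpair : pairing e (map phi (enum X)) ws.
Hypothesis hdisj : edge_disjoint ws.
Hypothesis hP : {in ws, forall c, ~~ (P c.1 && P (walk_end c))}.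

Let S := map (pick_end P) ws.
Let f := split_character phi ws P.

Let phi_inj : injective phi. Proof. by case: hT => [[]]. Qed.
Let pw : all (fun w => path e w.1 w.2) ws. Proof. by case/andP: hpair. Qed.
Let hends : perm_eq (endpoints ws) (map phi (enum X)). Proof. by case/andP: hpair. Qed.

Let uniq_ends : uniq (endpoints ws).
Proof. by rewrite (perm_uniq hends) map_inj_uniq ?enum_uniq. Qed.

Let uws : uniq ws. Proof. exact: uniq_walks_of_ends uniq_ends. Qed.

Let pick_end_in c : pick_end P c \in walk_ends c.
Proof. by rewrite /pick_end; case: ifP; rewrite !inE eqxx ?orbT. Qed.

Let mem_S v : v \in S -> exists z, v = phi z.
Proof.
case/mapP => c cin ->; have : pick_end P c \in map phi (enum X).
  by rewrite -(perm_mem hends); apply: mem_endpoints cin (pick_end_in c).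
by case/mapP => z _ ->; exists z.
Qed.

Lemma split_character_card : #|[set z | f z]| = size ws.
Proof.
have uS : uniq S by rewrite map_inj_in_uniq // => c c' cin c'in hcc;
  apply: (walk_ends_inj uniq_ends cin c'in (pick_end_in c)); rewrite hcc.
rewrite -(size_map (pick_end P)) -/S -(card_uniqP uS) -(card_imset _ phi_inj).
apply: eq_card => v; apply/imsetP/idP => [[z] | vS].
  by rewrite inE ffunE => ? ->.
by have [z Ev] := mem_S vS; exists z => //; rewrite inE ffunE -Ev.
Qed.

Lemma split_character_preferred z : P (phi z) -> f z.
Proof.
move=> Pz; rewrite ffunE; have : phi z \in endpoints ws by rewrite (perm_mem hends) map_f ?mem_enum.
case/flattenP => _ /mapP [c cin ->]; rewrite !inE => /orP[]/eqP hz; apply/mapP; exists c => //.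
  by rewrite /pick_end; case: ifP => // Pl; move: (hP cin); rewrite -hz Pz Pl.
by rewrite /pick_end -hz Pz.
Qed.

Let S_separates c : c \in ws -> (c.1 \in S) != (walk_end c \in S).
Proof.
move=> cin; have pS : pick_end P c \in S by apply: map_f.
have oS v : v \in walk_ends c -> v != pick_end P c -> v \notin S.
  move=> vc nv; apply/mapP => [[c' c'in Ev]].
  have ecc : c = c' by apply: (walk_ends_inj uniq_ends cin c'in vc); rewrite Ev pick_end_in.
  by move: nv; rewrite Ev ecc eqxx.
have ne := walk_ends_neq uniq_ends cin.
have endc : walk_end c \in walk_ends c by rewrite !inE eqxx orbT.
move: pS oS; rewrite /pick_end; case: ifP => _ pS oS.
  by rewrite pS (negbTE (oS _ (mem_head _ _) ne)).
by rewrite pS (negbTE (oS _ endc _)) // eq_sym.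
Qed.

Lemma pscore_split_character : pscore e phi f = size ws.
Proof.
apply/eqP; rewrite eqn_leq -{1}split_character_card pscore_le_card_true //=.
apply: pscore_ge_changes.
  apply: leq_trans (leq_card _ phi_inj); rewrite cardE -(size_map phi) -(perm_size hends).
  by rewrite size_endpoints -addnn leq_addr.
move=> g /forallP hg; apply: changes_ge_edge_disjoint => // c cin.
have gS v : v \in walk_ends c -> g v = (v \in S).
  move=> /(mem_endpoints cin); rewrite (perm_mem hends) => /mapP [z _ ->].
  by rewrite (eqP (hg z)) ffunE.
by rewrite !gS ?S_separates ?mem_head // !inE eqxx orbT.
Qed.

End SplitCharacter.

Lemma has_odd_of_odd_sumn (s : seq nat) : odd (sumn s) -> has odd s.
Proof. by elim: s => //= n s IH; rewrite oddD; case: (odd n) => //= /IH. Qed.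

Lemma count_enum (X : finType) (P : pred X) : count P (enum X) = #|P|.
Proof. by rewrite cardE -size_filter /enum_mem filter_predT. Qed.

Lemma subset_pair (T : eqType) (a b u v : T) :
  u != v -> u \in [:: a; b] -> v \in [:: a; b] -> {subset [:: a; b] <= [:: u; v]}.
Proof.
rewrite !inE => nuv /orP[]/eqP Eu /orP[]/eqP Ev t; subst u v; rewrite ?eqxx in nuv => //.
all: by rewrite !inE orbC.
Qed.

Section OddComponent.
Variables (X V : finType) (e : rel V) (phi : X -> V) (x y : X) (p : seq V) (b w : V).
Hypothesis hT : binary_phylo_tree e phi.
Hypotheses (pp : path e (phi x) p) (hl : last (phi x) p = phi y) (up : uniq (phi x :: p)).
Hypotheses (bin : b \in p) (bny : b != phi y) (ebw : e b w) (wnot : w \notin phi x :: p).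

Let Pl := phi x :: p.
Let eC := [rel u v | [&& e u v, u \notin Pl & v \notin Pl]].
Let C := [pred v | connect eC w v].
Let eN := avoid e (mem (walk_edges (phi x, p))).

Let esym : symmetric e. Proof. by case: hT => [[[]]]. Qed.
Let eirr : irreflexive e. Proof. by case: hT => [[[]]]. Qed.
Let acyclic : forall c : seq V, uniq c -> 3 <= size c -> ~~ cycle e c.
Proof. by case: hT => [[[]]]. Qed.

Let component_off_path v : C v -> v \notin Pl.
Proof.
case/connectP => s; elim/last_ind: s => [_ -> // | s t _].
by rewrite rcons_path last_rcons => /andP[_ /and3P[]] _ _ + ->.
Qed.

Let off_path_edge u t : u \notin Pl -> e u t -> eN u t.
Proof.
move=> uP eut; rewrite /= eut; apply: contra uP => /walk_edges_sub; apply.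
exact: set21.
Qed.

Let b_neighbours : deg e b = 3 /\ forall t, e b t -> (t \in Pl) || (t == w).
Proof.
have [s1 [[|n s2] Ep]] : exists s1 s2, p = s1 ++ b :: s2.
  by case/splitPr: bin => s1 s2; exists s1, s2.
  by move: hl bny; rewrite Ep last_cat /= => ->; rewrite eqxx.
move: pp up; rewrite Ep cat_path -cat_cons cat_uniq.
move=> /andP[_ /and3P[epb ebn _]] /and3P[_ hn /andP[]].
set u := last (phi x) s1; rewrite inE negb_or => /andP[nbn _] _.
have uPl : u \in Pl by rewrite /Pl Ep -cat_cons mem_cat mem_last.
have nPl : n \in Pl by rewrite /Pl Ep -cat_cons mem_cat !inE eqxx !orbT.
have un : u != n.
  by apply: contraNneq _ hn => <-; apply/hasP; exists u; rewrite ?mem_last // !inE eqxx orbT.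
have nw t : t \in Pl -> t != w by move=> tP; apply: contraNneq _ wnot => <-.
have ebu : e b u by rewrite esym.
have u3 : uniq [:: u; n; w] by rewrite /= !inE negb_or un (nw _ uPl) (nw _ nPl).
have [d3 hb] := deg3_neighbours (hT.2 b) ebu ebn ebw u3.
split=> // t /hb ht; rewrite !inE in ht; case/or3P: ht => /eqP->; by rewrite ?uPl ?nPl ?eqxx ?orbT.
Qed.

Let b_not_leaf : b \notin codom phi.
Proof. by case: hT => [[_ _ hleaf _] _]; rewrite -hleaf b_neighbours.1. Qed.

Let bPl : b \in Pl. Proof. by rewrite inE bin orbT. Qed.

Let connect_to_path t : t \in Pl -> connect eN b t -> t = b.
Proof. by move=> tP /(path_vertices_disconnected esym eirr acyclic pp up bPl tP). Qed.

Let closed_b_component : closed eN [pred v | (v == b) || C v].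
Proof.
apply: intro_closed; first exact/sym_connect_sym/avoid_sym.
move=> u t eut /orP[/eqP Eub | Cu].
  subst u; have [tP | tP] := boolP (t \in Pl).
    by rewrite inE (connect_to_path tP (connect1 eut)) eqxx.
  move: (b_neighbours.2 t (andP eut).1); rewrite (negbTE tP) => /eqP->.
  by apply/orP; right; exact: connect0.
have uP := component_off_path Cu.
have [tP | tP] := boolP (t \in Pl); last first.
  by apply/orP; right; apply: connect_trans Cu (connect1 _); rewrite /= (andP eut).1 uP.
apply/orP; left; apply/eqP/connect_to_path => //.
have ewb : e w b by rewrite esym.
have eNbw : eN b w by move: (off_path_edge wnot ewb); rewrite /eN /= esym setUC.
apply: (connect_trans (connect1 (e := eN) eNbw)); apply: (connect_trans _ (connect1 (e := eN) eut)).
by apply: (connect_sub (e' := eN) _ Cu) => v v' /and3P[evv vP _]; apply/connect1/off_path_edge.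
Qed.

Let walk_off_path_even q qs : path eN q qs ->
  q \in codom phi -> last q qs \in codom phi -> ~~ odd (count C [:: q; last q qs]).
Proof.
move=> pN hq hl'; have nb v : v \in codom phi -> v != b by apply: contraTneq => ->.
have := closed_connect closed_b_component (path_connect pN (mem_last q qs)).
rewrite -!topredE /= (negbTE (nb _ hq)) (negbTE (nb _ hl')) /= => ->.
by rewrite addn0 addnn odd_double.
Qed.

Let cherry_walk_covers_path q qs : path e q qs -> q != last q qs ->
  q \in [:: phi x; phi y] -> last q qs \in [:: phi x; phi y] ->
  {subset walk_edges (phi x, p) <= walk_edges (q, qs)}.
Proof.
move=> pq nql hq hl'.
have onc v : v \in [:: phi x; phi y] -> v \in q :: qs.
  move=> hv; have hw := subset_pair nql hq hl' hv.
  by rewrite !inE in hw; case/orP: hw => /eqP->; rewrite ?mem_head ?mem_last.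
apply: (path_edges_unavoidable esym eirr acyclic pp up pq); apply: onc.
  exact: mem_head.
by rewrite hl !inE eqxx orbT.
Qed.

(* A walk pairing the leaves of the cherry contains every edge of the path, so by
   edge-disjointness the remaining walks avoid the path, and then their ends are
   either both or neither in the component of [w]. *)
Lemma odd_component_separates_cherry ws :
  pairing e (map phi (enum X)) ws -> edge_disjoint ws ->
  odd #|[set z | connect eC w (phi z)]| ->
  {in ws, forall c, ~~ ((c.1 \in [:: phi x; phi y]) && (walk_end c \in [:: phi x; phi y]))}.
Proof.
move=> /andP[pw hends] hdisj hodd [q qs] cin; apply/negP => /andP[/= hq hl'].
have phi_inj : injective phi by case: hT => [[]].
have uends : uniq (endpoints ws) by rewrite (perm_uniq hends) map_inj_uniq ?enum_uniq.
have all_edges := cherry_walk_covers_path (allP pw _ cin) (walk_ends_neq uends cin) hq hl'.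
have [[q' qs'] c'in oc'] : exists2 c', c' \in ws & odd (count C (walk_ends c')).
  apply/hasP; move: hodd; rewrite cardsE -count_enum -count_map -(permP hends) count_flatten.
  by move/has_odd_of_odd_sumn; rewrite !has_map; apply: sub_has.
have inPl v : v \in [:: phi x; phi y] -> v \in Pl.
  by rewrite -hl !inE => /orP[]/eqP->; rewrite ?eqxx // -in_cons mem_last.
have offC v : v \in [:: phi x; phi y] -> ~~ connect eC w v.
  by move=> /inPl vP; apply: contraL vP; apply: component_off_path.
have c'c : (q', qs') != (q, qs).
  apply: contraTneq oc' => ->.
  by rewrite /walk_ends /walk_end /= (negbTE (offC _ hq)) (negbTE (offC _ hl')).
have hdis : ~~ has (mem (walk_edges (q, qs))) (walk_edges (q', qs')).
  by have := allP (allP hdisj _ c'in) _ cin; rewrite (negbTE c'c).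
have pN : path eN q' qs'.
  apply: (path_avoid (E := mem (walk_edges (phi x, p))) (allP pw _ c'in)) => F HF.
  by apply: contra hdis => /all_edges HFc; apply/hasP; exists F.
have leaf v : v \in walk_ends (q', qs') -> v \in codom phi.
  by move=> /(mem_endpoints c'in); rewrite (perm_mem hends) => /mapP [z _ ->]; apply: codom_f.
have lin : last q' qs' \in walk_ends (q', qs') by rewrite !inE eqxx orbT.
by case/negP: (walk_off_path_even pN (leaf _ (mem_head _ _)) (leaf _ lin)).
Qed.

End OddComponent.

Theorem corollary5 (k : nat) (X V1 V2 : finType)
  (e1 : rel V1) (phi1 : X -> V1) (e2 : rel V2) (phi2 : X -> V2)
  (x y : X) (p : seq V2) :
  1 <= k -> #|X| = 2 * k ->
  binary_phylo_tree e1 phi1 -> binary_phylo_tree e2 phi2 ->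
  A_k e1 phi1 k = A_k e2 phi2 k ->
  cherry e1 phi1 x y ->
  (* P = phi2 x :: p is the x-y path in the second tree *)
  path e2 (phi2 x) p -> last (phi2 x) p = phi2 y -> uniq (phi2 x :: p) ->
  forall b w : V2, b \in p -> b != phi2 y -> e2 b w -> w \notin phi2 x :: p ->
  ~~ odd #|[set z : X | connect
       [rel u v | [&& e2 u v, u \notin phi2 x :: p & v \notin phi2 x :: p]]
       w (phi2 z)]|.
Proof.
move=> _ hX hT1 hT2 hA hch pp hl up b w bin bny ebw wnot; apply/negP => hodd.
have [[[esym eirr conn _] phi2_inj _ _] _] := hT2.
have uL : uniq (map phi2 (enum X)) by rewrite map_inj_uniq ?enum_uniq.
have sL : size (map phi2 (enum X)) = k.*2 by rewrite size_map -cardT hX mul2n.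
have eL : ~~ odd (size (map phi2 (enum X))) by rewrite sL odd_double.
have [ws [hpair hdisj]] := exists_edge_disjoint_pairing esym eirr conn uL eL.
have sws : size ws = k.
  by apply/double_inj; rewrite -sL -size_endpoints (perm_size (proj2 (andP hpair))).
pose P : pred V2 := fun v => v \in [:: phi2 x; phi2 y].
have hP := odd_component_separates_cherry hT2 pp hl up bin bny ebw wnot hpair hdisj hodd.
pose f := split_character phi2 ws P.
have fx : f x by apply: (split_character_preferred hpair hP); rewrite /= eqxx.
have fy : f y by apply: (split_character_preferred hpair hP); rewrite /= eqxx orbT.
have : f \in A_k e1 phi1 k by rewrite hA inE pscore_split_character // sws.
rewrite inE => /eqP pf1.
have := cherry_pscore_lt_card_true hT1 hch fx fy.
by rewrite pf1 (split_character_card _ hT2 hpair) sws ltnn.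
Qed.
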